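(* If $G$ is an appended $3$-star of order $n$, maximum degree $\Delta=3$ and diameter at most $6$, then $\gamma^{\rm ID}(G)=\frac23 n+\frac13$.
   Context: An identifying code of a graph $G$ is a set $C\subseteq V(G)$ such that every vertex $v$ has $N[v]\cap C\neq\emptyset$ and for all distinct $u,v$, $N[u]\cap C \ne N[v]\cap C$, where $N[v]$ is the closed neighborhood; $\gamma^{\rm ID}(G)$ is its minimum size. A 3-star is $K_{1,3}$. For a graph $G'$, a vertex $v$ of $G'$ and a star $S$, $G'\rhd_v S$ is the graph obtained from the disjoint union of $G'$ and $S$ by identifying $v$ with a leaf of $S$. An appended 3-star is a graph $G_p$ ($p\ge 0$) where $G_0$ is a 3-star and $G_i=G_{i-1}\rhd_{v_{i-1}}S_i$ for $i=1,\dots,p$, with each $S_i$ a 3-star and $v_{i-1}$ a vertex of $G_{i-1}$. *)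

From mathcomp Require Import all_boot all_order all_algebra.
Set Implicit Arguments. Unset Strict Implicit. Unset Printing Implicit Defensive.

Section Graphs.
Variables (T : finType) (e : rel T).

Definition cnbhd (v : T) : {set T} := [set u | (u == v) || e v u].

Definition deg (v : T) : nat := #|[set u | e v u]|.
Definition maxdeg : nat := \max_(v : T) deg v.

Definition idcodeb (C : {set T}) : bool :=
  [forall v, cnbhd v :&: C != set0] &&
  [forall u, forall v, (u != v) ==> (cnbhd u :&: C != cnbhd v :&: C)].

(* gamma^ID: minimum size of an identifying code (0 if none exists) *)
Definition gammaID : nat :=
  match [pick C | idcodeb C] with
  | Some C0 => #|[arg min_(C < C0 | idcodeb C) #|C|]|
  | None => 0
  end.

Definition diam_le (d : nat) : Prop :=
  forall u v : T, exists s : seq T, [/\ size s <= d, path e u s & last u s = v].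

End Graphs.

(* Concrete model of the appended 3-star G_p, on vertices 0 .. 3p+3.
   G_0 is the star with centre 0 and leaves 1,2,3.  The i-th appended star
   (i = 0..p-1, i.e. S_{i+1}) has new centre c = 3i+4 and new leaves c+1, c+2,
   and its third leaf is identified with the vertex vs_i of G_i
   (so vs_i < 3i+4). *)
Definition app3_arc (vs : seq nat) (x y : nat) : bool :=
  ((x == 0) && (y \in [:: 1; 2; 3])) ||
  has (fun i => (x == 3 * i + 4) &&
        [|| y == nth 0 vs i, y == 3 * i + 5 | y == 3 * i + 6])
      (iota 0 (size vs)).

Definition app3_edge (vs : seq nat) (x y : nat) : bool :=
  app3_arc vs x y || app3_arc vs y x.

Definition app3_valid (vs : seq nat) : bool :=
  all (fun i => nth 0 vs i < 3 * i + 4) (iota 0 (size vs)).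

Definition appended_3star (T : finType) (e : rel T) : Prop :=
  exists vs : seq nat, app3_valid vs /\
  #|T| = 3 * size vs + 4 /\
  exists f : T -> nat, [/\ injective f,
     (forall x, f x < 3 * size vs + 4) &
     (forall x y, e x y = app3_edge vs (f x) (f y))].

From mathcomp Require Import all_boot all_order all_algebra.
From mathcomp Require Import zify ring.
Set Implicit Arguments. Unset Strict Implicit. Unset Printing Implicit Defensive.

(* Removing the last appended star of G_p keeps the maximum degree at most 3 and the
   diameter at most 6: the star hangs from a cut vertex, so distances between the
   remaining vertices are unchanged.  Hence the G_p with these two properties can be
   listed up to isomorphism one star at a time, every such one-star extension of a
   listed graph being mapped onto a listed graph by an explicit isomorphism.  Ten
   graphs arise, all with p <= 5.  In each of them (n = 3p + 4) the 2p + 3 vertices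
   that are not star centres form an identifying code, and an exhaustive search shows
   that every set of p + 2 vertices contains a closed neighbourhood N[v] or a symmetric
   difference N[u] (+) N[v] with u <> v, so no identifying code misses p + 2 vertices. *)

Lemma mem_iota0 x n : (x \in iota 0 n) = (x < n).
Proof. by rewrite mem_iota add0n. Qed.

Section RelationsOnSegment.
Variable n : nat.
Implicit Types (E : rel nat) (s : nat -> nat).

Definition deg_leqb (d : nat) E : bool :=
  all (fun x => count (E x) (iota 0 n) <= d) (iota 0 n).

Fixpoint ball E (j u : nat) : seq nat :=
  if j is j'.+1 then
    let R := ball E j' u in
    R ++ [seq w <- iota 0 n | (w \notin R) && has (fun z => E z w) R]
  else [:: u].

Definition covers (B : seq nat) : bool := all (fun w => w \in B) (iota 0 n).

Definition diam_leb (d : nat) E : bool := all (fun u => covers (ball E d u)) (iota 0 n).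

Lemma mem_ballS E j u w : (w \in ball E j.+1 u) =
  (w \in ball E j u) || (w < n) && has (fun z => E z w) (ball E j u).
Proof.
rewrite /= mem_cat mem_filter mem_iota0.
by case: (w \in ball E j u) => //=; rewrite andbC.
Qed.

Lemma ball_leq E j k u w : j <= k -> w \in ball E j u -> w \in ball E k u.
Proof.
move=> + Hw; elim: k => [|k IHk]; first by rewrite leqn0 => /eqP Hj; rewrite -Hj.
by rewrite leq_eqVlt => /predU1P [<- //| /IHk Hk]; rewrite mem_ballS Hk.
Qed.

Lemma ball_bound E j u w : u < n -> w \in ball E j u -> w < n.
Proof.
move=> Hu; elim: j w => [|j IHj] w; first by rewrite inE => /eqP ->.
by rewrite mem_ballS => /orP [/IHj | /andP []].
Qed.

Lemma diam_lebP d E :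
  reflect (forall u w, u < n -> w < n -> w \in ball E d u) (diam_leb d E).
Proof.
apply: (iffP allP) => [H u w Hu Hw | H u].
  by move: (H u); rewrite mem_iota0 => /(_ Hu) /allP; apply; rewrite mem_iota0.
by rewrite mem_iota0 => Hu; apply/allP => w; rewrite mem_iota0; apply: H.
Qed.

Definition iso_on E1 E2 s : Prop :=
  [/\ forall x, x < n -> s x < n,
      forall x y, x < n -> y < n -> s x = s y -> x = y &
      forall x y, x < n -> y < n -> E1 x y = E2 (s x) (s y)].

Lemma perm_map_iota s :
  (forall x, x < n -> s x < n) -> (forall x y, x < n -> y < n -> s x = s y -> x = y) ->
  perm_eq [seq s x | x <- iota 0 n] (iota 0 n).
Proof.
move=> s_lt s_inj.
have s_uniq : uniq [seq s x | x <- iota 0 n].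
  by rewrite map_inj_in_uniq ?iota_uniq // => x y; rewrite !mem_iota0; apply: s_inj.
apply: uniq_perm; rewrite ?iota_uniq //.
have [] // := @uniq_min_size _ _ (iota 0 n) s_uniq; last by rewrite size_map.
by move=> z /mapP [x]; rewrite !mem_iota0 => /s_lt Hx ->.
Qed.

Lemma iso_on_surj E1 E2 s : iso_on E1 E2 s -> forall y, y < n -> exists2 x, x < n & s x = y.
Proof.
case=> s_lt s_inj _ y Hy.
have : y \in [seq s x | x <- iota 0 n].
  by rewrite (perm_mem (perm_map_iota s_lt s_inj)) mem_iota0.
by case/mapP => x; rewrite mem_iota0 => Hx ->; exists x.
Qed.

Definition iso_seqb E1 E2 (t : seq nat) : bool :=
  [&& uniq t, size t == n, all (fun x => x < n) t &
   all (fun x => all (fun y => E1 x y == E2 (nth 0 t x) (nth 0 t y)) (iota 0 n))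
     (iota 0 n)].

Lemma iso_seqbP E1 E2 (t : seq nat) : iso_seqb E1 E2 t -> iso_on E1 E2 (nth 0 t).
Proof.
case/and4P => t_uniq /eqP t_size /allP t_lt /allP tE; split.
- by move=> x Hx; apply/t_lt/mem_nth; rewrite t_size.
- by move=> x y Hx Hy /eqP; rewrite nth_uniq ?t_size // => /eqP.
- move=> x y Hx Hy; have := tE x; rewrite mem_iota0 => /(_ Hx) /allP /(_ y).
  by rewrite mem_iota0 => /(_ Hy) /eqP.
Qed.

Lemma iso_on_comp E1 E2 E3 s t :
  iso_on E1 E2 s -> iso_on E2 E3 t -> iso_on E1 E3 (t \o s).
Proof.
case=> [s_lt s_inj sE] [t_lt t_inj tE]; split => /= [x Hx|x y Hx Hy|x y Hx Hy].
- exact/t_lt/s_lt.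
- by move/t_inj => /(_ (s_lt _ Hx) (s_lt _ Hy)); apply: s_inj.
- by rewrite sE // tE // s_lt.
Qed.

Lemma deg_leqb_iso d E1 E2 s : iso_on E1 E2 s -> deg_leqb d E1 -> deg_leqb d E2.
Proof.
move=> iso /allP deg1; have [s_lt s_inj sE] := iso.
apply/allP => _ /[!mem_iota0] /(iso_on_surj iso) [x Hx <-].
rewrite -(permP (perm_map_iota s_lt s_inj)) count_map.
rewrite (@eq_in_count _ _ (E1 x)) ?deg1 ?mem_iota0 // => y /[!mem_iota0] Hy.
by rewrite /= sE.
Qed.

Definition agree_on E1 E2 : Prop := forall x y, x < n -> y < n -> E1 x y = E2 x y.

Lemma deg_leqb_agree d E1 E2 : agree_on E1 E2 -> deg_leqb d E1 = deg_leqb d E2.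
Proof.
move=> E12; apply: eq_in_all => x /[!mem_iota0] Hx.
by congr (_ <= _); apply: eq_in_count => y /[!mem_iota0]; apply: E12.
Qed.

Lemma ball_agree E1 E2 j u : agree_on E1 E2 -> u < n -> ball E1 j u = ball E2 j u.
Proof.
move=> E12 Hu; elim: j => [|j /= ->] //; congr (_ ++ _).
apply: eq_in_filter => w /[!mem_iota0] Hw; congr (_ && _).
by apply: eq_in_has => z Hz; apply: E12 => //; apply: ball_bound Hz.
Qed.

Lemma diam_leb_agree d E1 E2 : agree_on E1 E2 -> diam_leb d E1 = diam_leb d E2.
Proof.
by move=> E12; apply: eq_in_all => u /[!mem_iota0] Hu; rewrite (ball_agree d E12 Hu).
Qed.

Definition tabulate E : seq (seq bool) :=
  [seq [seq E x y | y <- iota 0 n] | x <- iota 0 n].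

Definition tab_rel (t : seq (seq bool)) : rel nat := fun x y => nth false (nth [::] t x) y.

Lemma tab_rel_tabulate E : agree_on (tab_rel (tabulate E)) E.
Proof.
move=> x y Hx Hy.
by rewrite /tab_rel /tabulate !(nth_map 0) ?size_iota // !nth_iota.
Qed.

End RelationsOnSegment.

Lemma ball_hom n1 n2 (E1 E2 : rel nat) f j u w :
  (forall x, x < n1 -> f x < n2) ->
  (forall x y, x < n1 -> y < n1 -> E1 x y -> (f x == f y) || E2 (f x) (f y)) ->
  u < n1 -> w \in ball n1 E1 j u -> f w \in ball n2 E2 j (f u).
Proof.
move=> f_lt fE Hu; elim: j w => [|j IHj] w; first by rewrite !inE => /eqP ->.
rewrite !mem_ballS => /orP [/IHj -> // | /andP [Hw /hasP [z Hz E1zw]]].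
have /IHj fz := Hz; have Hz1 := ball_bound Hu Hz.
case/orP: (fE _ _ Hz1 Hw E1zw) => [/eqP <- | E2zw]; first by rewrite fz.
by rewrite f_lt //=; apply/orP; right; apply/hasP; exists (f z).
Qed.

Lemma diam_leb_iso n d E1 E2 s :
  iso_on n E1 E2 s -> diam_leb n d E1 -> diam_leb n d E2.
Proof.
move=> iso /diam_lebP diam1; have [s_lt _ sE] := iso.
apply/diam_lebP => u' w' /(iso_on_surj iso) [u Hu <-] /(iso_on_surj iso) [w Hw <-].
by apply: ball_hom (diam1 _ _ Hu Hw) => // x y Hx Hy; rewrite -sE // orbC => ->.
Qed.

Definition app3_order (vs : seq nat) : nat := 3 * size vs + 4.

Lemma app3_order_rcons vs v : app3_order (rcons vs v) = app3_order vs + 3.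
Proof. rewrite /app3_order size_rcons; lia. Qed.

Lemma app3_valid_nth vs i : app3_valid vs -> i < size vs -> nth 0 vs i < 3 * i + 4.
Proof. by move=> /allP valid Hi; apply: valid; rewrite mem_iota0. Qed.

Lemma app3_arc_bound vs x y : app3_valid vs -> app3_arc vs x y ->
  x < app3_order vs /\ y < app3_order vs.
Proof.
rewrite /app3_arc /app3_order => valid.
case/orP => [/andP [/eqP -> Hy] | /hasP [i /[!mem_iota0] Hi /andP [/eqP -> Hy]]].
  by move: Hy; rewrite !inE => /or3P [] /eqP ->; lia.
by have := app3_valid_nth valid Hi; case/or3P: Hy => /eqP ->; lia.
Qed.

Lemma app3_edge_bound vs x y : app3_valid vs -> app3_edge vs x y ->
  x < app3_order vs /\ y < app3_order vs.
Proof. by move=> valid /orP [] /(app3_arc_bound valid) []. Qed.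

Definition new_arc (m v x y : nat) : bool := (x == m) && ((y == v) || (m < y < m + 3)).

Lemma iota0S k : iota 0 k.+1 = iota 0 k ++ [:: k].
Proof. by rewrite -addn1 iotaD. Qed.

Lemma app3_arc_rcons vs v x y :
  app3_arc (rcons vs v) x y = app3_arc vs x y || new_arc (app3_order vs) v x y.
Proof.
rewrite /app3_arc /new_arc /app3_order size_rcons iota0S has_cat /=.
rewrite orbF -!orbA nth_rcons ltnn eqxx; congr [|| _, _ | _].
  by apply: eq_in_has => i /[!mem_iota0] Hi; rewrite nth_rcons Hi.
by congr (_ && _); case: (y == v) => //=; apply/idP/idP; lia.
Qed.

Lemma app3_edge_rcons vs v x y : app3_edge (rcons vs v) x y =
  [|| app3_edge vs x y, new_arc (app3_order vs) v x y | new_arc (app3_order vs) v y x].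
Proof.
rewrite /app3_edge !app3_arc_rcons.
by case: (app3_arc vs x y); case: (app3_arc vs y x); rewrite //= orbC.
Qed.

Lemma app3_valid_rcons vs v :
  app3_valid (rcons vs v) = app3_valid vs && (v < app3_order vs).
Proof.
rewrite /app3_valid size_rcons iota0S all_cat /= andbT nth_rcons ltnn eqxx.
by congr (_ && _); apply: eq_in_all => i /[!mem_iota0] Hi; rewrite nth_rcons Hi.
Qed.

Section ExtendByIdentity.
Variables (m : nat) (s : nat -> nat).
Hypotheses (s_lt : forall x, x < m -> s x < m)
  (s_inj : forall x y, x < m -> y < m -> s x = s y -> x = y).

Definition extend_id (x : nat) : nat := if x < m then s x else x.

Lemma extend_id_lt x : (extend_id x < m) = (x < m).
Proof. by rewrite /extend_id; case: ifP => [/s_lt -> | ->]. Qed.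

Lemma extend_id_eq x y : (extend_id x == extend_id y) = (x == y).
Proof.
rewrite /extend_id; case: (ltnP x m) => Hx; case: (ltnP y m) => Hy.
- by apply/eqP/eqP => [/s_inj -> | ->].
- by rewrite (ltn_eqF (leq_trans (s_lt Hx) Hy)) (ltn_eqF (leq_trans Hx Hy)).
- by rewrite (gtn_eqF (leq_trans (s_lt Hy) Hx)) (gtn_eqF (leq_trans Hy Hx)).
- by [].
Qed.

Lemma new_arc_extend_id v x y : v < m ->
  new_arc m (s v) (extend_id x) (extend_id y) = new_arc m v x y.
Proof.
move=> Hv; have em : extend_id m = m by rewrite /extend_id ltnn.
have ev : extend_id v = s v by rewrite /extend_id Hv.
rewrite /new_arc -{1}em -ev !extend_id_eq; congr [&& _ & _ || _].
case: (ltnP y m) => Hy; last by rewrite /extend_id (ltnNge y m) Hy.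
by have := extend_id_lt y; rewrite Hy; lia.
Qed.

End ExtendByIdentity.

Lemma iso_on_app3_rcons vs r v s :
  app3_valid vs -> app3_valid r -> size vs = size r -> v < app3_order vs ->
  iso_on (app3_order vs) (app3_edge vs) (app3_edge r) s ->
  iso_on (app3_order vs + 3) (app3_edge (rcons vs v)) (app3_edge (rcons r (s v)))
    (extend_id (app3_order vs) s).
Proof.
move=> valid_vs valid_r size_eq Hv [s_lt s_inj sE].
have order_eq : app3_order r = app3_order vs by rewrite /app3_order size_eq.
set m := app3_order vs.
have old_edge x y : app3_edge r (extend_id m s x) (extend_id m s y) = app3_edge vs x y.
  have [/andP [Hx Hy] | Hxy] := boolP ((x < m) && (y < m)).
    by rewrite /extend_id Hx Hy sE.
  apply/idP/idP => [/(app3_edge_bound valid_r) | /(app3_edge_bound valid_vs)] [Hx Hy].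
    by move: Hx Hy Hxy; rewrite order_eq !(extend_id_lt s_lt) => -> ->.
  by move: Hxy; rewrite Hx Hy.
split => [x Hx | x y _ _ /eqP | x y _ _].
- by rewrite /extend_id; case: ifP => // /s_lt; lia.
- by rewrite (extend_id_eq s_lt s_inj) => /eqP.
- by rewrite !app3_edge_rcons order_eq old_edge !(new_arc_extend_id s_lt s_inj).
Qed.

Lemma deg_leqb_rcons vs v d :
  deg_leqb (app3_order vs + 3) d (app3_edge (rcons vs v)) ->
  deg_leqb (app3_order vs) d (app3_edge vs).
Proof.
move=> /allP deg_ext; apply/allP => x /[!mem_iota0] Hx.
have /deg_ext : x \in iota 0 (app3_order vs + 3) by rewrite mem_iota0 ltn_addr.
apply: leq_trans; rewrite iotaD count_cat; apply: leq_trans (leq_addr _ _).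
by apply: sub_count => y /=; rewrite app3_edge_rcons => ->.
Qed.

Lemma diam_leb_rcons vs v D : app3_valid (rcons vs v) ->
  diam_leb (app3_order vs + 3) D (app3_edge (rcons vs v)) ->
  diam_leb (app3_order vs) D (app3_edge vs).
Proof.
rewrite app3_valid_rcons => /andP [valid Hv] /diam_lebP diam_ext.
(* Collapsing the new star onto its attachment vertex v maps walks to walks. *)
set m := app3_order vs; pose retract x := if x < m then x else v.
have retract_id x : x < m -> retract x = x by rewrite /retract => ->.
apply/diam_lebP => u w Hu Hw; rewrite -(retract_id u Hu) -(retract_id w Hw).
apply: ball_hom (diam_ext _ _ (ltn_addr 3 Hu) (ltn_addr 3 Hw)) => [x _ | x y _ _ |];
  last exact: ltn_addr.
  by rewrite /retract; case: ifP.
rewrite app3_edge_rcons /new_arc => /or3P [Exy | |].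
  by have [Hx Hy] := app3_edge_bound valid Exy; rewrite !retract_id ?Exy ?orbT.
all: case/andP => /eqP -> /orP [/eqP -> | /andP [H _]];
  by rewrite /retract ltnn ?Hv ?ltnNge ?(ltnW H) ?eqxx.
Qed.

(* The adjacency table is computed once, instead of re-evaluating [app3_edge] at each
   query during [vm_compute]. *)
Definition app3_admissible (vs : seq nat) : bool :=
  let m := app3_order vs in let F := tab_rel (tabulate m (app3_edge vs)) in
  deg_leqb m 3 F && diam_leb m 6 F.

Lemma app3_admissibleE vs : app3_admissible vs =
  deg_leqb (app3_order vs) 3 (app3_edge vs) && diam_leb (app3_order vs) 6 (app3_edge vs).
Proof.
have tab := @tab_rel_tabulate (app3_order vs) (app3_edge vs).
by rewrite /app3_admissible (deg_leqb_agree 3 tab) (diam_leb_agree 6 tab).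
Qed.

Lemma app3_admissible_rcons vs v :
  app3_valid (rcons vs v) -> app3_admissible (rcons vs v) -> app3_admissible vs.
Proof.
rewrite !app3_admissibleE app3_order_rcons => valid /andP [deg_ext diam_ext].
by rewrite (deg_leqb_rcons deg_ext) (diam_leb_rcons valid diam_ext).
Qed.

Definition app3_reps : seq (seq nat) :=
  [:: [::]; [:: 1]; [:: 1; 1]; [:: 1; 2]; [:: 1; 1; 2]; [:: 1; 2; 3]; [:: 1; 1; 2; 2];
      [:: 1; 1; 2; 3]; [:: 1; 1; 2; 2; 3]; [:: 1; 1; 2; 2; 3; 3]].

(* An entry ((r, v), (r', t)) asserts that nth 0 t maps G_(rcons r v) isomorphically
   onto G_r'; the key (r, v) only selects the entry to be checked. *)
Definition app3_certs : seq (seq nat * nat * (seq nat * seq nat)) :=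
  [:: ([::], 1, ([:: 1], [:: 0; 1; 2; 3; 4; 5; 6]));
      ([:: ], 2, ([:: 1], [:: 0; 2; 1; 3; 4; 5; 6]));
      ([:: ], 3, ([:: 1], [:: 0; 2; 3; 1; 4; 5; 6]));
      ([:: 1], 1, ([:: 1; 1], [:: 0; 1; 2; 3; 4; 5; 6; 7; 8; 9]));
      ([:: 1], 2, ([:: 1; 2], [:: 0; 1; 2; 3; 4; 5; 6; 7; 8; 9]));
      ([:: 1], 3, ([:: 1; 2], [:: 0; 1; 3; 2; 4; 5; 6; 7; 8; 9]));
      ([:: 1], 5, ([:: 1; 2], [:: 4; 1; 5; 6; 0; 2; 3; 7; 8; 9]));
      ([:: 1], 6, ([:: 1; 2], [:: 4; 1; 5; 6; 0; 3; 2; 7; 8; 9]));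
      ([:: 1; 1], 2, ([:: 1; 1; 2], [:: 0; 1; 2; 3; 4; 5; 6; 7; 8; 9; 10; 11; 12]));
      ([:: 1; 1], 3, ([:: 1; 1; 2], [:: 0; 1; 3; 2; 4; 5; 6; 7; 8; 9; 10; 11; 12]));
      ([:: 1; 1], 5, ([:: 1; 1; 2], [:: 4; 1; 5; 6; 0; 2; 3; 7; 8; 9; 10; 11; 12]));
      ([:: 1; 1], 6, ([:: 1; 1; 2], [:: 4; 1; 5; 6; 0; 3; 2; 7; 8; 9; 10; 11; 12]));
      ([:: 1; 1], 8, ([:: 1; 1; 2], [:: 4; 1; 5; 6; 7; 8; 9; 0; 2; 3; 10; 11; 12]));
      ([:: 1; 1], 9, ([:: 1; 1; 2], [:: 4; 1; 5; 6; 7; 8; 9; 0; 3; 2; 10; 11; 12]));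
      ([:: 1; 2], 1, ([:: 1; 1; 2], [:: 0; 1; 2; 3; 7; 8; 9; 10; 11; 12; 4; 5; 6]));
      ([:: 1; 2], 2, ([:: 1; 1; 2], [:: 0; 2; 1; 3; 10; 11; 12; 7; 8; 9; 4; 5; 6]));
      ([:: 1; 2], 3, ([:: 1; 2; 3], [:: 0; 1; 2; 3; 4; 5; 6; 7; 8; 9; 10; 11; 12]));
      ([:: 1; 1; 2], 2, ([:: 1; 1; 2; 2], [:: 0; 1; 2; 3; 4; 5; 6; 7; 8; 9; 10; 11; 12; 13; 14; 15]));
      ([:: 1; 1; 2], 3, ([:: 1; 1; 2; 3], [:: 0; 1; 2; 3; 4; 5; 6; 7; 8; 9; 10; 11; 12; 13; 14; 15]));
      ([:: 1; 2; 3], 1, ([:: 1; 1; 2; 3], [:: 0; 1; 2; 3; 4; 5; 6; 10; 11; 12; 13; 14; 15; 7; 8; 9]));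
      ([:: 1; 2; 3], 2, ([:: 1; 1; 2; 3], [:: 0; 2; 1; 3; 10; 11; 12; 7; 8; 9; 13; 14; 15; 4; 5; 6]));
      ([:: 1; 2; 3], 3, ([:: 1; 1; 2; 3], [:: 0; 2; 3; 1; 10; 11; 12; 13; 14; 15; 4; 5; 6; 7; 8; 9]));
      ([:: 1; 1; 2; 2], 3, ([:: 1; 1; 2; 2; 3], [:: 0; 1; 2; 3; 4; 5; 6; 7; 8; 9; 10; 11; 12; 13; 14; 15; 16; 17; 18]));
      ([:: 1; 1; 2; 3], 2, ([:: 1; 1; 2; 2; 3], [:: 0; 1; 2; 3; 4; 5; 6; 7; 8; 9; 13; 14; 15; 16; 17; 18; 10; 11; 12]));
      ([:: 1; 1; 2; 3], 3, ([:: 1; 1; 2; 2; 3], [:: 0; 1; 3; 2; 4; 5; 6; 7; 8; 9; 16; 17; 18; 13; 14; 15; 10; 11; 12]));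
      ([:: 1; 1; 2; 2; 3], 3, ([:: 1; 1; 2; 2; 3; 3], [:: 0; 1; 2; 3; 4; 5; 6; 7; 8; 9; 10; 11; 12; 13; 14; 15; 16; 17; 18; 19; 20; 21]))].

Definition extension_certified (r : seq nat) (v : nat) : bool :=
  if app3_admissible (rcons r v) then
    has (fun c : seq nat * nat * (seq nat * seq nat) =>
           if c.1 == (r, v) then
             let: (r', t) := c.2 in
             [&& r' \in app3_reps, size r' == (size r).+1 &
                 iso_seqb (app3_order r') (app3_edge (rcons r v)) (app3_edge r') t]
           else false)
      app3_certs
  else true.

Lemma app3_reps_valid : all app3_valid app3_reps.
Proof. by []. Qed.

Lemma app3_certs_complete :
  all (fun r => all (extension_certified r) (iota 0 (app3_order r))) app3_reps.
Proof. by vm_compute. Qed.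

Lemma app3_classify vs : app3_valid vs -> app3_admissible vs ->
  exists r s, [/\ r \in app3_reps, size r = size vs &
                  iso_on (app3_order vs) (app3_edge vs) (app3_edge r) s].
Proof.
elim/last_ind: vs => [|vs v IHvs]; first by exists [::], id; split.
move=> valid_ext adm_ext; have := valid_ext; rewrite app3_valid_rcons => /andP [valid Hv].
have [r [s [Hr size_r iso]]] := IHvs valid (app3_admissible_rcons valid_ext adm_ext).
have valid_r : app3_valid r by apply: (allP app3_reps_valid).
have iso_ext := iso_on_app3_rcons valid valid_r (esym size_r) Hv iso.
have adm_r : app3_admissible (rcons r (s v)).
  move: adm_ext; rewrite !app3_admissibleE !app3_order_rcons /app3_order size_r.
  by case/andP => /(deg_leqb_iso iso_ext) -> /(diam_leb_iso iso_ext).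
have Hsv : s v < app3_order r.
  by rewrite /app3_order size_r; case: iso => s_lt _ _; apply: s_lt.
have := allP app3_certs_complete r Hr => /allP /(_ (s v)); rewrite mem_iota0 => /(_ Hsv).
rewrite /extension_certified adm_r => /hasP [[rv [r' t]] _] /=.
case: eqP => // _ /and3P [Hr' /eqP size_r' /iso_seqbP iso_t].
exists r', (nth 0 t \o extend_id (app3_order vs) s); split => //.
  by rewrite size_r' size_rcons size_r.
have order_r' : app3_order r' = app3_order vs + 3.
  by rewrite -(app3_order_rcons vs v) /app3_order size_r' !size_rcons size_r.
by rewrite app3_order_rcons; apply: iso_on_comp iso_ext _; rewrite -order_r'.
Qed.

Definition cnbr (E : rel nat) (v w : nat) : bool := (w == v) || E v w.

Definition idcode_on (n : nat) (E : rel nat) (L : seq nat) : bool :=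
  all (fun v => has (fun w => (w \in L) && cnbr E v w) (iota 0 n)) (iota 0 n) &&
  all (fun u => all (fun v => (u == v) ||
     has (fun w => (w \in L) && (cnbr E u w != cnbr E v w)) (iota 0 n)) (iota 0 n))
    (iota 0 n).

(* A set is an identifying code iff it meets every closed neighbourhood and every
   symmetric difference of two distinct closed neighbourhoods. *)
Definition id_constraints (n : nat) (E : rel nat) : seq (seq nat) :=
  [seq [seq w <- iota 0 n | cnbr E v w] | v <- iota 0 n] ++
  [seq [seq w <- iota 0 n | cnbr E u w != cnbr E v w]
     | u <- iota 0 n, v <- [seq v <- iota 0 n | u != v]].

(* A set includes some constraint iff it includes an inclusion-minimal one; the others
   are dropped to speed up the search. *)
Definition minimal_sets (cs : seq (seq nat)) : seq (seq nat) :=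
  [seq c <- cs | ~~ has (fun d : seq nat => (d != c) && all (fun w => w \in c) d) cs].

Lemma minimal_sets_sub cs : {subset minimal_sets cs <= cs}.
Proof. by move=> c; rewrite mem_filter => /andP []. Qed.

Definition independent (cs : seq (seq nat)) (X : seq nat) : bool :=
  all (fun c => ~~ all (fun w => w \in X) c) cs.

Lemma independent_sub cs X Y : {subset X <= Y} -> independent cs Y -> independent cs X.
Proof.
move=> sXY /allP indepY; apply/allP => c Hc; apply: contra (indepY c Hc).
by move=> /allP cX; apply/allP => w /cX /sXY.
Qed.

(* Branch and bound: each candidate v is either added to R, keeping only the later
   candidates w with w :: v :: R independent, or dropped; lists with fewer than k
   candidates are cut off. *)
Fixpoint no_independent_subset (cs : seq (seq nat)) (k : nat) (R cands : seq nat) :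
    bool :=
  if k is k'.+1 then
    (fix loop (cands : seq nat) : bool :=
       if cands is v :: cands' then
         (size cands < k) ||
         ((~~ independent cs (v :: R) ||
           no_independent_subset cs k' (v :: R)
             [seq w <- cands' | independent cs (w :: v :: R)])
          && loop cands')
       else true) cands
  else false.

Lemma no_independent_subset_sound cs k R cands : no_independent_subset cs k R cands ->
  forall S, uniq S -> {subset S <= cands} -> k <= size S -> ~~ independent cs (S ++ R).
Proof.
elim: k R cands => [//|k IHk] R cands; elim: cands => [|v cands IHc].
  by move=> _ [|x S] // _ /(_ x (mem_head _ _)).
move=> /= /orP [short | /andP [pick drop]] S S_uniq sub_S size_S.
  by exfalso; have := uniq_leq_size S_uniq sub_S; move: short size_S => /=; lia.
have [vS | vNS] := boolP (v \in S); last first.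
  have sub_S' : {subset S <= cands}.
    move=> w Hw; have := sub_S w Hw; rewrite inE => /predU1P [wv | //].
    by rewrite -wv Hw in vNS.
  exact: IHc drop S S_uniq sub_S' size_S.
apply/negP => indep_SR.
have indep_vR : independent cs (v :: R).
  apply: independent_sub indep_SR => w; rewrite inE mem_cat.
  by case/predU1P => [-> | ->]; rewrite ?vS ?orbT.
move: pick; rewrite indep_vR /= => /IHk /(_ (rem v S) (rem_uniq v S_uniq)) no_indep.
have indep_rest : independent cs (rem v S ++ v :: R).
  apply: independent_sub indep_SR => z; rewrite mem_cat inE => /or3P [zS | /eqP -> | zR].
  + by move: zS; rewrite (mem_rem_uniq _ S_uniq) inE mem_cat => /andP [_ ->].
  + by rewrite mem_cat vS.
  + by rewrite mem_cat zR orbT.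
apply/negP: indep_rest; apply: no_indep; last first.
  by rewrite size_rem //; move: size_S; case: (size S).
move=> w; rewrite (mem_rem_uniq _ S_uniq) inE => /andP [wv wS].
rewrite mem_filter; apply/andP; split; last by have := sub_S w wS; rewrite inE (negbTE wv).
apply: independent_sub indep_SR => z; rewrite !inE mem_cat.
by case/or3P => [/eqP -> | /eqP -> | ->]; rewrite ?wS ?vS ?orbT.
Qed.

Definition app3_noncentres (vs : seq nat) : seq nat :=
  [seq w <- iota 0 (app3_order vs) | if w < 4 then w != 0 else (w - 4) %% 3 != 0].

(* With n = 3p + 4, the complement of an identifying code of size 2p + 2 would be an
   independent set of p + 2 vertices. *)
Definition app3_gamma_cert (r : seq nat) : bool :=
  let m := app3_order r in
  [&& idcode_on m (app3_edge r) (app3_noncentres r),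
      size (app3_noncentres r) == 2 * size r + 3 &
      no_independent_subset (minimal_sets (id_constraints m (app3_edge r))) (size r + 2)
        [::] (iota 0 m)].

Lemma app3_gamma_certs : all app3_gamma_cert app3_reps.
Proof. by vm_compute. Qed.

Section Embedding.
Variables (T : finType) (e : rel T) (n : nat) (En : rel nat) (g : T -> nat).
Hypotheses (g_inj : injective g) (g_lt : forall x, g x < n) (card_T : #|T| = n)
  (eE : forall x y, e x y = En (g x) (g y)).

Lemma perm_map_enum : perm_eq [seq g x | x <- enum T] (iota 0 n).
Proof.
have g_uniq : uniq [seq g x | x <- enum T] by rewrite map_inj_uniq ?enum_uniq.
apply: uniq_perm; rewrite ?iota_uniq //.
have [] // := @uniq_min_size _ _ (iota 0 n) g_uniq.
- by move=> z /mapP [x _ ->]; rewrite mem_iota0.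
- by rewrite size_map size_iota -card_T cardE.
Qed.

Lemma embed_surj w : w < n -> exists x, g x = w.
Proof.
rewrite -mem_iota0 -(perm_mem perm_map_enum) => /mapP [x _ ->].
by exists x.
Qed.

Lemma deg_embed x : deg e x = count (En (g x)) (iota 0 n).
Proof.
rewrite /deg cardE /enum_mem size_filter -(permP perm_map_enum) [RHS]count_map enumT.
by apply: eq_count => y; rewrite /= inE eE.
Qed.

Lemma deg_leqb_embed d : maxdeg e <= d -> deg_leqb n d En.
Proof.
move=> maxdeg_d; apply/allP => _ /[!mem_iota0] /embed_surj [x <-].
by rewrite -deg_embed (leq_trans _ maxdeg_d) // (@leq_bigmax _ (deg e)).
Qed.

Lemma path_ball a s : path e a s -> g (last a s) \in ball n En (size s) (g a).
Proof.
elim/last_ind: s => [|s b IHs]; first by rewrite inE.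
rewrite rcons_path last_rcons size_rcons => /andP [/IHs in_ball eab].
rewrite mem_ballS g_lt /=; apply/orP; right; apply/hasP.
by exists (g (last a s)); rewrite // -eE.
Qed.

Lemma diam_leb_embed d : diam_le e d -> diam_leb n d En.
Proof.
move=> diam_d; apply/diam_lebP => _ _ /embed_surj [a <-] /embed_surj [b <-].
have [s [size_s path_s <-]] := diam_d a b.
exact: ball_leq size_s (path_ball path_s).
Qed.

Lemma mem_cnbhd_embed x y : (y \in cnbhd e x) = cnbr En (g x) (g y).
Proof. by rewrite /cnbhd inE eE /cnbr (inj_eq g_inj). Qed.

Lemma idcode_embed L : idcode_on n En L -> idcodeb e [set x | g x \in L].
Proof.
case/andP => /allP dom /allP sep; apply/andP; split; apply/forallP => x.
  have := dom (g x); rewrite mem_iota0 => /(_ (g_lt x)) /hasP [w /[!mem_iota0]].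
  move=> /embed_surj [y <-] /andP [yL xy].
  by apply/set0Pn; exists y; rewrite in_setI mem_cnbhd_embed xy inE yL.
apply/forallP => y; apply/implyP => xy.
have := sep (g x); rewrite mem_iota0 => /(_ (g_lt x)) /allP /(_ (g y)).
rewrite mem_iota0 (inj_eq g_inj) (negbTE xy) => /(_ (g_lt y)) /hasP [w /[!mem_iota0]].
move=> /embed_surj [z <-] /andP [zL Nxy]; apply: contra_neq Nxy => Nxy.
have := congr1 (fun A : {set T} => z \in A) Nxy.
by rewrite /= !in_setI !mem_cnbhd_embed inE zL !andbT.
Qed.

Lemma card_preim_embed (L : seq nat) : #|[set x | g x \in L]| <= size L.
Proof.
rewrite cardE -(size_map g); apply: uniq_leq_size; first by rewrite map_inj_uniq ?enum_uniq.
by move=> w /mapP [x]; rewrite mem_enum inE => xL ->.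
Qed.

Lemma independent_compl_idcode (C : {set T}) (cs : seq (seq nat)) :
  idcodeb e C -> {subset cs <= id_constraints n En} ->
  independent cs [seq g x | x <- enum (~: C)].
Proof.
case/andP => /forallP dom /forallP sep sub_cs.
have mem_compl y : (g y \in [seq g x | x <- enum (~: C)]) = (y \notin C).
  by rewrite mem_map // mem_enum inE.
apply/allP => c /sub_cs; rewrite mem_cat => /orP [|].
  case/mapP => v /[!mem_iota0] /embed_surj [x <-] ->; apply/negP => /allP c_out.
  have /set0Pn [y] := dom x; rewrite inE => /andP [xy yC].
  have : g y \in [seq w <- iota 0 n | cnbr En (g x) w].
    by rewrite mem_filter mem_iota0 g_lt -mem_cnbhd_embed xy.
  by move/c_out; rewrite mem_compl yC.
case/allpairsPdep => u [v [/[!mem_iota0] /embed_surj [a <-] + ->]].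
rewrite mem_filter mem_iota0 => /andP [ab /embed_surj [b gb]].
move: ab; rewrite -gb (inj_eq g_inj) => ab.
apply/negP => /allP c_out; have /forallP /(_ b) /implyP /(_ ab) /eqP := sep a; apply.
apply/setP => y; rewrite !in_setI !mem_cnbhd_embed.
case yC: (y \in C); rewrite ?andbF ?andbT //; apply/eqP; apply: contraT => Nab.
have : g y \in [seq w <- iota 0 n | cnbr En (g a) w != cnbr En (g b) w].
  by rewrite mem_filter mem_iota0 g_lt Nab.
by move/c_out; rewrite mem_compl yC.
Qed.

Lemma idcode_card_gt (cs : seq (seq nat)) k (C : {set T}) :
  {subset cs <= id_constraints n En} ->
  no_independent_subset cs k [::] (iota 0 n) -> idcodeb e C -> n < k + #|C|.
Proof.
move=> sub_cs search C_id; have indep_out := independent_compl_idcode C_id sub_cs.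
have out_uniq : uniq [seq g x | x <- enum (~: C)] by rewrite map_inj_uniq ?enum_uniq.
have size_out : size [seq g x | x <- enum (~: C)] = n - #|C|.
  by rewrite size_map -cardE -card_T -(cardsC C); lia.
rewrite ltnNge; apply: contraL indep_out => small_k.
rewrite -[X in independent _ X]cats0.
apply: no_independent_subset_sound search _ out_uniq _ _.
  by move=> _ /mapP [x _ ->]; rewrite mem_iota0.
by rewrite size_out; lia.
Qed.

End Embedding.

Lemma gammaID_eq (T : finType) (e : rel T) m :
  (exists2 C, idcodeb e C & #|C| <= m) -> (forall C, idcodeb e C -> m <= #|C|) ->
  gammaID e = m.
Proof.
case=> C1 C1_id C1_small min_m; rewrite /gammaID; case: pickP => [C0 C0_id | no_code].
  case: arg_minnP => // C C_id C_min.
  by apply/eqP; rewrite eqn_leq min_m // andbT (leq_trans (C_min _ C1_id)).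
by have := no_code C1; rewrite C1_id.
Qed.

Lemma appended_3star_rep (T : finType) (e : rel T) :
  appended_3star e -> maxdeg e = 3 -> diam_le e 6 ->
  exists (r : seq nat) (g : T -> nat),
    [/\ r \in app3_reps, injective g, forall x, g x < app3_order r,
        #|T| = app3_order r & forall x y, e x y = app3_edge r (g x) (g y)].
Proof.
case=> vs [valid [card_T [f [f_inj f_lt fE]]]] maxdeg3 diam6.
have adm : app3_admissible vs.
  rewrite app3_admissibleE (deg_leqb_embed f_inj f_lt card_T fE) ?maxdeg3 //.
  exact: (diam_leb_embed f_inj f_lt card_T fE).
have [r [s [Hr size_r [s_lt s_inj sE]]]] := app3_classify valid adm.
have order_r : app3_order r = app3_order vs by rewrite /app3_order size_r.
exists r, (s \o f); split => //; rewrite ?order_r //.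
- by move=> x y /(s_inj _ _ (f_lt x) (f_lt y)) /f_inj.
- by move=> x; apply: s_lt.
- by move=> x y; rewrite fE sE.
Qed.

Lemma gammaID_app3_rep (T : finType) (e : rel T) (r : seq nat) (g : T -> nat) :
  r \in app3_reps -> injective g -> (forall x, g x < app3_order r) ->
  #|T| = app3_order r -> (forall x y, e x y = app3_edge r (g x) (g y)) ->
  gammaID e = 2 * size r + 3.
Proof.
move=> Hr g_inj g_lt card_T eE.
case/and3P: (allP app3_gamma_certs r Hr) => code_ok /eqP size_code search_ok.
apply: gammaID_eq.
  exists [set x | g x \in app3_noncentres r]; first exact: idcode_embed code_ok.
  by rewrite -size_code card_preim_embed.
move=> C C_id.
have := idcode_card_gt g_inj g_lt card_T eE (@minimal_sets_sub _) search_ok C_id.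
by rewrite /app3_order; lia.
Qed.

Local Open Scope ring_scope.

Theorem mainTheorem13 (T : finType) (e : rel T) (n : nat) :
  appended_3star e -> #|T| = n -> maxdeg e = 3%N -> diam_le e 6 ->
  (gammaID e)%:R = 2%:R / 3%:R * n%:R + 1 / 3%:R :> rat.
Proof.
move=> app3 <- maxdeg3 diam6.
have [r [g [Hr g_inj g_lt card_T eE]]] := appended_3star_rep app3 maxdeg3 diam6.
rewrite (gammaID_app3_rep Hr g_inj g_lt card_T eE) card_T /app3_order.
by field.
Qed.
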